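(* Let $\varrho=(\varrho_m)_{1\le m\le n-1}$ and $\sigma=(\sigma_m)_{1\le m\le n-1}$ be two independent uniformly random permutations of $\{1,\dots,n-1\}$. Then $(U_1,\dots,U_{n-1})$ is equal in distribution to the process \[ \Bigl(\#\{1\le m\le n-1:\varrho_m<k<\sigma_m\}+1\Bigr)_{1\le k\le n-1}. \]
   Context: Urn process: let $n\ge2$. An urn initially contains $n$ black balls. It is emptied in $n$ steps: in each of the first $n-1$ steps a uniformly random pair of balls is removed from the urn and replaced by one red ball; in step $n$ the last remaining ball is removed. $U_k$ is the number of red balls in the urn after $k$ steps, $0\le k\le n$. *)

From HB Require Import structures.
From mathcomp Require Import all_boot all_order all_algebra all_fingroup.
Set Implicit Arguments. Unset Strict Implicit. Unset Printing Implicit Defensive.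
Import Order.TTheory GRing.Theory Num.Theory.

(* One step of the urn: the urn holds N balls, r of them red (N - r black).
   A uniformly random pair among the 'C(N,2) pairs is removed and replaced by
   one red ball.  If j red balls are removed, the new red count is r - j + 1.
   urn_step N r r' = probability that the new red count is r'. *)
Definition urn_step (N r r' : nat) : rat :=
  if (r' <= r.+1) && (r.+1 - r' <= 2) then
    (('C(r, r.+1 - r') * 'C(N - r, 2 - (r.+1 - r')))%:R / ('C(N, 2))%:R)%R
  else 0%R.

Fixpoint urn_path_prob (N r : nat) (s : seq nat) : rat :=
  match s with
  | [::] => 1%R
  | r' :: s' => (urn_step N r r' * urn_path_prob N.-1 r' s')%R
  end.

(* Law of (U_1, ..., U_{n-1}): P(U_k = u_k for 1 <= k <= n-1), where u is
   indexed by i : 'I_(n-1) standing for k = i+1.  Initially n black balls. *)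
Definition urn_law (n : nat) (u : 'I_(n.-1) -> nat) : rat :=
  urn_path_prob n 0 [seq u i | i <- enum 'I_(n.-1)].

(* Law of the permutation process: (rho, sigma) uniform on pairs of
   permutations of {1,...,n-1} (encoded as 'I_(n-1), value v <-> v+1);
   probability that for every k = i+1, #{m : rho_m < k < sigma_m} + 1 = u_k. *)
Definition perm_law (n : nat) (u : 'I_(n.-1) -> nat) : rat :=
  ((#|[pred p : {perm 'I_(n.-1)} * {perm 'I_(n.-1)} |
        [forall i : 'I_(n.-1),
          #|[pred m : 'I_(n.-1) |
              ((p.1 m).+1 < i.+1 < (p.2 m).+1)%N]| + 1 == u i]]|)%:R
   / (#|{: {perm 'I_(n.-1)} * {perm 'I_(n.-1)}}|)%:R)%R.

Arguments urn_law n u : clear implicits.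
Arguments perm_law n u : clear implicits.

From HB Require Import structures.
From mathcomp Require Import all_boot all_order all_algebra all_fingroup.
From mathcomp Require Import ring zify.
Set Implicit Arguments. Unset Strict Implicit. Unset Printing Implicit Defensive.
Import GRing.Theory Num.Theory.

(* With pi = rho^-1 sigma, #{m : rho_m < k < sigma_m} is the number X_k of
   a < k with pi a > k, and pi is uniform independently of rho; so the second
   process is (X_k + 1)_k for one uniform permutation pi.  Reveal pi(0), pi(1),
   ... in turn.  After k values, X_k is the number of revealed values above k,
   and the next value is one of the X_k + 1 free values below k or one of the
   free values above k.  Counting completions summed over all sets of revealed
   values of a given size X_k, the moves X_k -> X_k + 1, X_k, X_k - 1 carry
   exactly the urn weights of drawing two black, one black and one red, or two
   red balls from an urn of n - k balls with X_k + 1 red ones. *)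

(** * Counting completions *)

Fixpoint bool_seqs (L : nat) : seq (seq bool) :=
  if L is L'.+1 then map (cons false) (bool_seqs L') ++ map (cons true) (bool_seqs L')
  else [:: [::]].

Lemma big_bool_seqsS L x (F : seq bool -> nat) :
  \sum_(h <- bool_seqs L.+1 | count id h == x) F h =
  \sum_(t <- bool_seqs L | count id t == x) F (false :: t) +
  (0 < x) * \sum_(t <- bool_seqs L | count id t == x.-1) F (true :: t).
Proof.
rewrite /= big_cat !big_map; congr (_ + _).
by case: x => [|x]; [rewrite big_pred0 | rewrite mul1n].
Qed.

Lemma big_bool_seqs_count0 L (F : seq bool -> nat) :
  \sum_(h <- bool_seqs L | count id h == 0) F h = F (nseq L false).
Proof.
elim: L F => [|L IH] F; first by rewrite big_cons big_nil addn0.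
by rewrite big_bool_seqsS mul0n addn0 (IH (fun t => F (false :: t))).
Qed.

(* [sum_fill G h] sums [G] over the sequences obtained from [h] by turning one
   [false] entry into [true]. *)
Fixpoint sum_fill (G : seq bool -> nat) (h : seq bool) : nat :=
  if h is b :: t then (if b then 0 else G (true :: t)) + sum_fill (fun t' => G (b :: t')) t
  else 0.

Lemma sum_fill_count L x G :
  \sum_(h <- bool_seqs L | count id h == x) sum_fill G h =
  x.+1 * \sum_(h <- bool_seqs L | count id h == x.+1) G h.
Proof.
elim: L x G => [|L IH] x G.
  by rewrite !big_cons !big_nil /=; case: (0 == x); rewrite ?muln0.
rewrite !big_bool_seqsS big_split IH /= mul1n.
case: x => [|x] /=; first by rewrite mul0n addn0 !mul1n addnC.
by rewrite (eq_bigr (sum_fill (fun t => G (true :: t))) (fun t _ => add0n _)) IH; ring.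
Qed.

(* [completions p h] counts the ways of extending a permutation prefix whose
   revealed values above the current position are marked by [h], so that the
   following crossing numbers plus one are [p]: the next value is one of the
   [(count id h).+1] free values below ([h] unchanged) or a free value above
   (a fill of [h]), and then the window moves up by one ([behead]). *)
Fixpoint completions (p : seq nat) (h : seq bool) : nat :=
  if p is r :: p' then
    let G h' := ((count id (behead h')).+1 == r) * completions p' (behead h') in
    (count id h).+1 * G h + sum_fill G h
  else 1.

Lemma completions_cons r p h :
  completions (r :: p) h =
  (count id h).+1 * (((count id (behead h)).+1 == r) * completions p (behead h)) +
  sum_fill (fun h' => ((count id (behead h')).+1 == r) * completions p (behead h')) h.
Proof. by []. Qed.

Definition total_completions (L x : nat) (p : seq nat) : nat :=
  \sum_(h <- bool_seqs L | count id h == x) completions p h.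

Lemma big_completions_shift L x r p :
  \sum_(h <- bool_seqs L.+1 | count id h == x)
     ((count id (behead h)).+1 == r) * completions p (behead h) =
  (x.+1 == r) * total_completions L x p +
  ((0 < x) && (x == r)) * total_completions L x.-1 p.
Proof.
rewrite big_bool_seqsS /total_completions !big_distrr /=.
congr (_ + _); first by apply: eq_bigr => t /eqP ->.
case: x => [|x] //=.
by apply: eq_bigr => t /eqP ->; rewrite mul1n.
Qed.

Lemma total_completions_cons L x r p :
  total_completions L.+1 x (r :: p) =
  x.+1 * ((r == x.+2) * total_completions L x.+1 p +
          (r == x.+1) * total_completions L x p * 2 +
          ((0 < x) && (r == x)) * total_completions L x.-1 p).
Proof.
pose G h := ((count id (behead h)).+1 == r) * completions p (behead h).
have -> : total_completions L.+1 x (r :: p) =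
    x.+1 * (\sum_(h <- bool_seqs L.+1 | count id h == x) G h +
            \sum_(h <- bool_seqs L.+1 | count id h == x.+1) G h).
  rewrite mulnDr -sum_fill_count big_distrr -big_split.
  by apply: eq_bigr => h /eqP hx; rewrite completions_cons hx.
rewrite !big_completions_shift /= !(eq_sym r).
by congr (_ * _); ring.
Qed.

Lemma total_completions_up L x p :
  total_completions L.+1 x (x.+2 :: p) = x.+1 * total_completions L x.+1 p.
Proof.
rewrite total_completions_cons eqxx.
have [-> ->] : (x.+2 == x.+1) = false /\ ((0 < x) && (x.+2 == x)) = false by lia.
by rewrite /=; ring.
Qed.

Lemma total_completions_stay L x p :
  total_completions L.+1 x (x.+1 :: p) = x.+1 * 2 * total_completions L x p.
Proof.
rewrite total_completions_cons eqxx.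
have [-> ->] : (x.+1 == x.+2) = false /\ ((0 < x) && (x.+1 == x)) = false by lia.
by rewrite /=; ring.
Qed.

Lemma total_completions_down L y p :
  total_completions L.+1 y.+1 (y.+1 :: p) = y.+2 * total_completions L y p.
Proof.
rewrite total_completions_cons eqxx.
have [-> ->] : (y.+1 == y.+3) = false /\ (y.+1 == y.+2) = false by lia.
by rewrite /=; ring.
Qed.

Lemma total_completions_far L x r p :
  (r < x) || (x.+2 < r) -> total_completions L.+1 x (r :: p) = 0.
Proof.
move=> far; rewrite total_completions_cons.
have [-> -> ->] : [/\ (r == x.+2) = false, (r == x.+1) = false & ((0 < x) && (r == x)) = false].
  by split; lia.
by rewrite /=; ring.
Qed.

Lemma total_completions0 L p : total_completions L 0 p = completions p (nseq L false).
Proof. exact: big_bool_seqs_count0. Qed.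

(** * Completions of permutation prefixes *)

Lemma count_mem_sym (T : eqType) (s t : seq T) : uniq s -> uniq t ->
  count (mem t) s = count (mem s) t.
Proof.
move=> s_uniq t_uniq; rewrite -!size_filter; apply: perm_size.
by apply: uniq_perm; rewrite ?filter_uniq // => w; rewrite !mem_filter andbC.
Qed.

Lemma count_gtn_mask m i (s : seq nat) : uniq s -> all (fun w => w < m) s ->
  count (ltn i) s = count id [seq k \in s | k <- iota i.+1 (m - i.+1)].
Proof.
move=> s_uniq /allP s_lt; rewrite count_map -count_mem_sym ?iota_uniq //.
apply: eq_in_count => w /s_lt /= w_lt; rewrite mem_iota; lia.
Qed.

Lemma sum_fill_iota a L (S : seq nat) (G : seq bool -> nat) :
  \sum_(k <- iota a L | k \notin S) G [seq w \in k :: S | w <- iota a L] =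
  sum_fill G [seq w \in S | w <- iota a L].
Proof.
elim: L a G => [|L IH] a G; first by rewrite big_nil.
rewrite /= big_cons /= mem_head.
have drop_a : [seq w \in a :: S | w <- iota a.+1 L] = [seq w \in S | w <- iota a.+1 L].
  apply/eq_in_map => w; rewrite mem_iota in_cons => /andP [a_lt _].
  by rewrite gtn_eqF.
have shift_a : \sum_(k <- iota a.+1 L | k \notin S)
      G ((a \in k :: S) :: [seq w \in k :: S | w <- iota a.+1 L]) =
    \sum_(k <- iota a.+1 L | k \notin S)
      G ((a \in S) :: [seq w \in k :: S | w <- iota a.+1 L]).
  rewrite big_seq_cond [RHS]big_seq_cond; apply: eq_bigr => k /andP [k_in _].
  by move: k_in; rewrite mem_iota in_cons => /andP [a_lt _]; rewrite ltn_eqF.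
by rewrite drop_a shift_a (IH a.+1 (fun t => G ((a \in S) :: t))); case: (a \in S).
Qed.

Section PermutationPrefixes.
Variable m : nat.
Implicit Types (pi : {perm 'I_m}) (s : seq nat) (u : nat -> nat).

Definition crossings pi (j : nat) : nat := #|[pred a : 'I_m | a < j < pi a]|.

Definition perm_prefix pi s : bool :=
  [forall a : 'I_m, (a < size s) ==> (val (pi a) == nth 0 s a)].

Definition above_mask s : seq bool :=
  [seq k \in s | k <- iota (size s).+1 (m - (size s).+1)].

Definition fits_after u (i : nat) pi : bool :=
  [forall j : 'I_m, (i < j) ==> ((crossings pi j).+1 == u j)].

Definition prefix_extensions u s : nat :=
  #|[pred pi | perm_prefix pi s && fits_after u (size s) pi]|.

Lemma card_ord_count k (Q : pred nat) : k <= m ->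
  #|[pred a : 'I_m | (a < k) && Q a]| = count Q (iota 0 k).
Proof.
move=> le_km; rewrite -sum1_card -(big_mkord (fun a => (a < k) && Q a) (fun=> 1)).
rewrite sum1_count /index_iota subn0 -(subnKC le_km) iotaD count_cat add0n.
rewrite (@eq_in_count _ _ pred0 (iota k (m - k))) ?count_pred0 ?addn0; last first.
  by move=> a; rewrite mem_iota => /andP [le_ka _]; rewrite ltnNge le_ka.
by apply: eq_in_count => a; rewrite mem_iota => /andP [_ ->].
Qed.

Lemma crossings_prefix pi s : perm_prefix pi s -> size s <= m ->
  crossings pi (size s) = count (ltn (size s)) s.
Proof.
move=> /forallP pi_s le_sm; rewrite /crossings.
rewrite (eq_card (B := [pred a : 'I_m | (a < size s) && (size s < nth 0 s a)])); last first.
  by move=> a; rewrite !inE; have := pi_s a; case: (a < size s) => //= /eqP ->.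
rewrite (card_ord_count (fun a => size s < nth 0 s a)) //.
by rewrite -[in RHS](mkseq_nth 0 s) count_map size_mkseq.
Qed.

Lemma perm_prefix_rcons pi s v (lt_sm : size s < m) :
  perm_prefix pi (rcons s v) = perm_prefix pi s && (val (pi (Ordinal lt_sm)) == v).
Proof.
apply/forallP/andP => [pi_sv | [/forallP pi_s /eqP pi_v] a].
  split; last by have := pi_sv (Ordinal lt_sm); rewrite /= nth_rcons size_rcons ltnn eqxx ltnSn.
  apply/forallP => a; apply/implyP => lt_as.
  by have := pi_sv a; rewrite size_rcons nth_rcons lt_as ltnS (ltnW lt_as).
apply/implyP; rewrite size_rcons ltnS leq_eqVlt => /orP [/eqP a_s | lt_as].
  have -> : a = Ordinal lt_sm by apply: val_inj.
  by rewrite /= nth_rcons ltnn eqxx pi_v.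
by have := pi_s a; rewrite lt_as nth_rcons lt_as.
Qed.

Lemma card_perm_prefix_full s : uniq s -> size s = m -> all (fun w => w < m) s ->
  #|[pred pi | perm_prefix pi s]| = 1.
Proof.
move=> s_uniq s_size /allP s_lt.
pose f (a : 'I_m) := insubd a (nth 0 s a).
have val_f a : val (f a) = nth 0 s a by rewrite val_insubd s_lt // mem_nth ?s_size.
have f_inj : injective f.
  by move=> a b /(congr1 val); rewrite !val_f => /eqP; rewrite nth_uniq ?s_size // => /eqP /val_inj.
rewrite (eq_card (B := pred1 (perm f_inj))) ?card1 // => pi; rewrite !inE.
apply/forallP/eqP => [pi_s | -> a]; last by rewrite permE val_f eqxx implybT.
apply/permP => a; apply: val_inj; rewrite permE val_f.
by have := pi_s a; rewrite s_size ltn_ord => /eqP.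
Qed.

Lemma card_perm_prefix_split (C : pred {perm 'I_m}) s (lt_sm : size s < m) :
  #|[pred pi | perm_prefix pi s && C pi]| =
  \sum_(k <- iota 0 m | k \notin s) #|[pred pi | perm_prefix pi (rcons s k) && C pi]|.
Proof.
rewrite -sum1_card (partition_big (fun pi => pi (Ordinal lt_sm)) predT) //=.
have -> : iota 0 m = index_iota 0 m by rewrite /index_iota subn0.
rewrite big_mkord [RHS]big_mkcond /=.
apply: eq_bigr => v _; case: ifP => v_s.
  rewrite -sum1_card; apply: eq_bigl => pi; rewrite !inE perm_prefix_rcons.
  by rewrite -val_eqE /= andbAC.
rewrite big_pred0 // => pi; rewrite !inE; apply/negP => /andP [/andP [/forallP pi_s _] /eqP pi_v].
move/negbFE: v_s; rewrite -index_mem => lt_vs.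
have lt_vm : index (val v) s < m := ltn_trans lt_vs lt_sm.
have /eqP pi_idx := implyP (pi_s (Ordinal lt_vm)) lt_vs.
rewrite nth_index -?index_mem // in pi_idx.
have : pi (Ordinal lt_vm) = pi (Ordinal lt_sm) by apply: val_inj; rewrite pi_idx pi_v.
by move/perm_inj/(congr1 val) => /= v_idx; move: lt_vs; rewrite v_idx ltnn.
Qed.

Lemma fits_afterS u i pi (lt_im : i.+1 < m) :
  fits_after u i pi = ((crossings pi i.+1).+1 == u i.+1) && fits_after u i.+1 pi.
Proof.
apply/forallP/andP => [fit | [fit_i /forallP fit] j].
  split; first by have := fit (Ordinal lt_im); rewrite /= ltnSn.
  by apply/forallP => j; apply/implyP => lt_ij; have := fit j; rewrite (ltnW lt_ij).
apply/implyP; rewrite leq_eqVlt => /orP [/eqP ij | lt_ij]; last by have := fit j; rewrite lt_ij.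
by have -> : j = Ordinal lt_im by apply: val_inj.
Qed.

Lemma fits_after_last u i pi : m <= i.+1 -> fits_after u i pi.
Proof.
move=> le_mi; apply/forallP => j; apply/implyP => lt_ij.
by have := ltn_ord j; rewrite ltnNge (leq_trans le_mi lt_ij).
Qed.

Lemma count_notin_below s : uniq s -> all (fun w => w < m) s ->
  count (fun k => k \notin s) (iota 0 (size s).+1) = (count id (above_mask s)).+1.
Proof.
move=> s_uniq s_lt.
have taken_below : count (mem s) (iota 0 (size s).+1) + count id (above_mask s) = size s.
  rewrite /above_mask -count_gtn_mask // -count_mem_sym ?iota_uniq //.
  rewrite -[RHS](count_predC (ltn (size s))) addnC; congr (_ + _).
  by apply: eq_count => w; rewrite /= -[0 :: _]/(iota 0 (size s).+1) mem_iota; lia.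
rewrite (@eq_count _ (fun k => k \notin s) (predC (mem s))) //.
have := count_predC (mem s) (iota 0 (size s).+1); rewrite size_iota; lia.
Qed.

Lemma above_mask_rcons s k :
  above_mask (rcons s k) = behead [seq w \in k :: s | w <- iota (size s).+1 (m - (size s).+1)].
Proof.
rewrite /above_mask size_rcons behead_map subnS.
have -> : behead (iota (size s).+1 (m - (size s).+1)) = iota (size s).+2 (m - (size s).+1).-1.
  by case: (m - _).
by apply/eq_map => w; rewrite mem_rcons.
Qed.

Lemma above_mask_cons_below s k : k <= size s ->
  [seq w \in k :: s | w <- iota (size s).+1 (m - (size s).+1)] = above_mask s.
Proof.
move=> le_ks; apply/eq_in_map => w; rewrite mem_iota in_cons => /andP [lt_sw _].
by rewrite (gtn_eqF (leq_ltn_trans le_ks lt_sw)).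
Qed.

Lemma prefix_extensions_rcons u s :
  uniq s -> all (fun w => w < m) s -> (size s).+1 < m ->
  prefix_extensions u s =
  \sum_(k <- iota 0 m | k \notin s)
     ((count id (above_mask (rcons s k))).+1 == u (size s).+1) * prefix_extensions u (rcons s k).
Proof.
move=> s_uniq s_lt lt_sm; rewrite /prefix_extensions (card_perm_prefix_split _ (ltnW lt_sm)).
rewrite big_seq_cond [RHS]big_seq_cond; apply: eq_bigr => k /andP [k_in k_s].
have sk_uniq : uniq (rcons s k) by rewrite rcons_uniq k_s.
have lt_km : k < m by move: k_in; rewrite mem_iota.
have sk_lt : all (fun w => w < m) (rcons s k) by rewrite all_rcons s_lt lt_km.
rewrite /above_mask size_rcons -(@count_gtn_mask m (size s).+1 (rcons s k)) //.
have cross_k pi : perm_prefix pi (rcons s k) ->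
    crossings pi (size s).+1 = count (ltn (size s).+1) (rcons s k).
  by move=> pi_sk; rewrite -(size_rcons s k) crossings_prefix // size_rcons ltnW.
case: eqP => [fit_k | /eqP nfit_k]; rewrite ?mul1n ?mul0n.
  apply: eq_card => pi; rewrite !inE (fits_afterS _ _ lt_sm).
  by case pi_sk: perm_prefix => //=; rewrite cross_k // fit_k eqxx.
apply: eq_card0 => pi; rewrite !inE (fits_afterS _ _ lt_sm).
by case pi_sk: perm_prefix => //=; rewrite cross_k // (negbTE nfit_k).
Qed.

Lemma prefix_extensions_completions u s :
  uniq s -> all (fun w => w < m) s -> size s < m ->
  prefix_extensions u s =
  completions [seq u k | k <- iota (size s).+1 (m - (size s).+1)] (above_mask s).
Proof.
move Lk : (m - (size s).+1) => L; elim: L s Lk => [|L IH] s Lk s_uniq s_lt lt_sm.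
  have m_eq : m = (size s).+1 by lia.
  rewrite /prefix_extensions (card_perm_prefix_split _ lt_sm) big_seq_cond.
  rewrite (eq_bigr (fun=> 1)) => [|k /andP [k_in k_s]].
    by rewrite -big_seq_cond sum1_count {1}m_eq count_notin_below // /above_mask Lk.
  rewrite (eq_card (B := [pred pi | perm_prefix pi (rcons s k)])) => [|pi].
    apply: card_perm_prefix_full; rewrite ?rcons_uniq ?k_s ?size_rcons ?all_rcons ?s_lt //.
    by rewrite andbT; move: k_in; rewrite mem_iota.
  by rewrite !inE fits_after_last ?andbT // m_eq.
have lt_s1m : (size s).+1 < m by lia.
have mask_s : above_mask s = [seq w \in s | w <- iota (size s).+1 L.+1] by rewrite /above_mask Lk.
pose p := [seq u k | k <- iota (size s).+2 L].
pose G h := ((count id (behead h)).+1 == u (size s).+1) * completions p (behead h).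
rewrite [iota _ L.+1]/= map_cons completions_cons -/p -/(G _).
rewrite prefix_extensions_rcons // big_seq_cond.
rewrite (eq_bigr (fun k => G [seq w \in k :: s | w <- iota (size s).+1 L.+1]))
  => [|k /andP [k_in k_s]]; last first.
  have lt_km : k < m by move: k_in; rewrite mem_iota.
  rewrite IH ?rcons_uniq ?k_s ?all_rcons ?s_lt ?lt_km ?size_rcons //; last by lia.
  by rewrite above_mask_rcons Lk.
rewrite -big_seq_cond -(_ : (size s).+1 + L.+1 = m); last by lia.
rewrite iotaD big_cat add0n sum_fill_iota -mask_s; congr (_ + _).
rewrite big_seq_cond (eq_bigr (fun=> G (above_mask s))) => [|k /andP [k_in _]]; last first.
  by rewrite -Lk above_mask_cons_below //; move: k_in; rewrite mem_iota ltnS.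
by rewrite -big_seq_cond big_const_seq iter_addn_0 count_notin_below // mulnC.
Qed.

End PermutationPrefixes.

Lemma above_mask_nil m : above_mask m [::] = nseq m.-1 false.
Proof.
have map_nil (t : seq nat) : [seq k \in [::] | k <- t] = nseq (size t) false.
  by elim: t => //= k t ->.
by rewrite /above_mask map_nil size_iota subn1.
Qed.

Lemma crossings0 m (pi : {perm 'I_m}) : crossings pi 0 = 0.
Proof. by apply: eq_card0 => a; rewrite !inE ltn0. Qed.

Lemma crossings_path_split m (u : 'I_m.+1 -> nat) (pi : {perm 'I_m.+1}) :
  [forall i : 'I_m.+1, (crossings pi i).+1 == u i] =
  (u ord0 == 1) && fits_after (u \o inord) 0 pi.
Proof.
apply/forallP/andP => [fit | [/eqP u0 /forallP fit] i].
  split; first by have := fit ord0; rewrite crossings0 eq_sym.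
  by apply/forallP => i; apply/implyP => _; rewrite /= inord_val.
have [i0 | i_gt0] := posnP i; last by have := fit i; rewrite i_gt0 /= inord_val.
have -> : i = ord0 by apply: val_inj.
by rewrite /= crossings0 u0.
Qed.

Lemma card_crossings_path m (u : 'I_m.+1 -> nat) :
  #|[pred pi : {perm 'I_m.+1} | [forall i : 'I_m.+1, (crossings pi i).+1 == u i]]| =
  (u ord0 == 1) * total_completions m 0 [seq u (inord k) | k <- iota 1 m].
Proof.
have -> : [seq u (inord k) | k <- iota 1 m] = [seq (u \o inord) k | k <- iota 1 (m.+1 - 1)].
  by rewrite subn1.
rewrite total_completions0 -[m in nseq m]/(m.+1.-1) -above_mask_nil.
rewrite -(@prefix_extensions_completions m.+1 (u \o inord) [::]) // /prefix_extensions.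
have perm_prefix_nil (pi : {perm 'I_m.+1}) : perm_prefix pi [::] by apply/forallP.
case: eqP => [u0 | u0]; [rewrite mul1n; apply: eq_card | rewrite mul0n; apply: eq_card0] => pi.
  by rewrite !inE crossings_path_split perm_prefix_nil u0.
by rewrite !inE crossings_path_split; case: eqP.
Qed.

Lemma crossings_pair m (r s : {perm 'I_m}) (i : 'I_m) :
  #|[pred k : 'I_m | (r k).+1 < i.+1 < (s k).+1]| = crossings (r^-1 * s)%g i.
Proof.
rewrite /crossings -!sum1_card [RHS](reindex_inj (@perm_inj _ r)) /=.
by apply: eq_bigl => k; rewrite !inE permM permK !ltnS.
Qed.

Lemma card_perm_pairs m (P : pred {perm 'I_m}) :
  #|[pred p : {perm 'I_m} * {perm 'I_m} | P (p.1^-1 * p.2)%g]| = m`! * #|P|.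
Proof.
rewrite -!sum1_card big_mkcond /=.
rewrite -(pair_big predT predT (fun r s => if P (r^-1 * s)%g then 1 else 0)) /=.
rewrite (eq_bigr (fun=> \sum_(pi in P) 1)) => [|r _]; first by rewrite sum_nat_const card_Sn mulnC.
rewrite [RHS]big_mkcond [RHS](reindex_inj (mulgI r^-1%g)) /=.
by apply: eq_bigr => s _; rewrite unfold_in.
Qed.

(** * Comparison with the urn *)

(* [state_weight L x] is the number of pairs of a set of [x] revealed values
   among [L] and an ordering of the [L.+1] remaining ones. *)
Definition state_weight (L x : nat) : nat := 'C(L, x) * L.+1`!.

Lemma double_bin2 n : 2 * 'C(n, 2) = n.-1 * n.
Proof. by rewrite (mul_bin_left n 1) bin1 subn1. Qed.

Lemma state_weight_up L x :
  x.+1 * state_weight L x.+1 * 'C(L.+2, 2) = state_weight L.+1 x * 'C(L.+1 - x, 2).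
Proof.
apply/eqP; rewrite -(eqn_pmul2l (ltn0Sn 1)); apply/eqP.
rewrite /state_weight [L.+2`!]factS.
transitivity ((L - x) * ((L.+1 - x) * 'C(L.+1, x)) * L.+2 * L.+1`!).
  transitivity (x.+1 * 'C(L, x.+1) * (2 * 'C(L.+2, 2)) * L.+1`!); first by ring.
  by rewrite mul_bin_left double_bin2 -(mul_bin_down L.+1 x) /=; ring.
transitivity ('C(L.+1, x) * L.+2 * L.+1`! * (2 * 'C(L.+1 - x, 2))); last by ring.
by rewrite double_bin2 subSKn; ring.
Qed.

Lemma state_weight_stay L x :
  x.+1 * 2 * state_weight L x * 'C(L.+2, 2) = state_weight L.+1 x * (x.+1 * (L.+1 - x)).
Proof.
rewrite /state_weight [L.+2`!]factS.
transitivity (x.+1 * 'C(L, x) * (2 * 'C(L.+2, 2)) * L.+1`!); first by ring.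
transitivity (x.+1 * (L.+1 * 'C(L, x)) * L.+2 * L.+1`!).
  by rewrite double_bin2 /=; ring.
by rewrite (mul_bin_down L.+1 x) /=; ring.
Qed.

Lemma state_weight_down L y :
  y.+2 * state_weight L y * 'C(L.+2, 2) = state_weight L.+1 y.+1 * 'C(y.+2, 2).
Proof.
apply/eqP; rewrite -(eqn_pmul2l (ltn0Sn 1)); apply/eqP.
rewrite /state_weight [L.+2`!]factS.
transitivity (y.+2 * (L.+1 * 'C(L, y)) * L.+2 * L.+1`!).
  transitivity (y.+2 * 'C(L, y) * (2 * 'C(L.+2, 2)) * L.+1`!); first by ring.
  by rewrite double_bin2 /=; ring.
transitivity ('C(L.+1, y.+1) * L.+2 * L.+1`! * (2 * 'C(y.+2, 2))); last by ring.
by rewrite (mul_bin_diag L.+1 y) double_bin2 /=; ring.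
Qed.

Local Open Scope ring_scope.

Lemma urn_step_up N r : urn_step N r r.+1 = 'C(N - r, 2)%:R / 'C(N, 2)%:R.
Proof. by rewrite /urn_step subnn leqnn bin0 mul1n. Qed.

Lemma urn_step_stay N r : urn_step N r r = (r * (N - r))%:R / 'C(N, 2)%:R.
Proof. by rewrite /urn_step subSnn leqnSn !bin1. Qed.

Lemma urn_step_down N r : urn_step N r.+1 r = 'C(r.+1, 2)%:R / 'C(N, 2)%:R.
Proof.
have r2 : (r.+2 - r = 2)%N by rewrite -addn2 addKn.
by rewrite /urn_step r2 leqW ?leqnSn // bin0 muln1.
Qed.

Lemma urn_step_far N r r' : (r'.+1 < r)%N || (r.+1 < r')%N -> urn_step N r r' = 0.
Proof.
rewrite /urn_step => /orP [far | far]; last by rewrite leqNgt far.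
by rewrite leq_subLR addn2 ltnS [(r <= _)%N]leqNgt far andbF.
Qed.

Lemma urn_step_first N r : (1 < N)%N -> urn_step N 0 r = (r == 1)%:R.
Proof.
move=> N_gt1; case: r => [|[|r]].
- by rewrite urn_step_stay mul0n mul0r.
- by rewrite urn_step_up subn0 divff // pnatr_eq0 -lt0n bin_gt0.
- by rewrite urn_step_far.
Qed.

Lemma natr_scale_ratio (a b c d : nat) :
  (0 < d)%N -> (a * d = b * c)%N -> forall P : rat, a%:R * P = b%:R * (c%:R / d%:R * P).
Proof.
move=> d_gt0 eq_ad P; rewrite mulrA; congr (_ * _).
by rewrite mulrA -natrM -eq_ad natrM mulfK // pnatr_eq0 -lt0n.
Qed.

Lemma total_completions_urn p x :
  (total_completions (size p) x p)%:R =
  (state_weight (size p) x)%:R * urn_path_prob (size p).+1 x.+1 p.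
Proof.
elim: p x => [|r p IH] x.
  by rewrite /total_completions /state_weight big_cons big_nil /=; case: x.
rewrite /=; set L := size p in IH *; have C_gt0 : (0 < 'C(L.+2, 2))%N by rewrite bin_gt0.
have [far|near] := boolP ((r < x) || (x.+2 < r))%N.
  by rewrite total_completions_far // urn_step_far ?mul0r ?mulr0 //; lia.
have : [|| r == x, r == x.+1 | r == x.+2] by lia.
case/or3P => /eqP ->.
- case: x {near} IH => [|y] IH.
    by rewrite total_completions_cons urn_step_down bin_small // mul0r mul0r mulr0.
  rewrite total_completions_down urn_step_down natrM IH mulrA -natrM.
  exact: (natr_scale_ratio C_gt0 (state_weight_down L y)).
- rewrite total_completions_stay urn_step_stay subSS natrM IH mulrA -natrM.
  exact: (natr_scale_ratio C_gt0 (state_weight_stay L x)).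
- rewrite total_completions_up urn_step_up subSS natrM IH mulrA -natrM.
  exact: (natr_scale_ratio C_gt0 (state_weight_up L x)).
Qed.

Lemma perm_law_crossings m (u : 'I_m -> nat) :
  perm_law m.+1 u =
  #|[pred pi : {perm 'I_m} | [forall i : 'I_m, (crossings pi i).+1 == u i]]|%:R / m`!%:R.
Proof.
rewrite /perm_law card_prod card_Sn.
set P := [pred pi : {perm 'I_m} | _].
rewrite (eq_card (B := [pred p : {perm 'I_m} * {perm 'I_m} | P (p.1^-1 * p.2)%g])) => [|p].
  rewrite card_perm_pairs !natrM -mulf_div divff ?mul1r // pnatr_eq0 -lt0n fact_gt0 //=.
by rewrite !unfold_in /=; apply: eq_forallb => i; rewrite crossings_pair -addn1.
Qed.

Theorem corollary8 (n : nat) (hn : (2 <= n)%N) (u : 'I_(n.-1) -> nat) :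
  urn_law n u = perm_law n u.
Proof.
case: n hn u => [|[|m]] // _ u.
set p := [seq u (inord k) | k <- iota 1 m].
have path_u : [seq u i | i <- enum 'I_m.+1] = u ord0 :: p.
  rewrite (eq_map (fun i => congr1 u (esym (inord_val i)))).
  rewrite (map_comp (u \o inord) val) val_enum_ord.
  by congr (u _ :: _); apply: val_inj; rewrite /= inordK.
rewrite /urn_law path_u /= urn_step_first // perm_law_crossings card_crossings_path natrM.
have := total_completions_urn p 0; rewrite size_map size_iota => ->.
rewrite /state_weight bin0 mul1n.
case: (u ord0 =P 1)%N => [-> | _]; last by rewrite !mul0r.
by rewrite !mul1r [_%:R * _]mulrC mulfK // pnatr_eq0 -lt0n fact_gt0.
Qed.
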